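(* Let $X$ be a comical set and let $f,g$ be $1$-cubes with $f\partial_{1,1}=g\partial_{1,0}$. Then any two composites of $f$ and $g$ (of any of the four kinds) are homotopic.
   Context: Cubical sets are presheaves on the box category $\square$ (objects $[1]^n=\{0<1\}^n$; morphisms generated by faces $\partial_{i,\varepsilon}$ inserting $\varepsilon$ as $i$-th coordinate, degeneracies $\sigma_i$ deleting the $i$-th coordinate, and max/min connections $\gamma_{i,1},\gamma_{i,0}$); operators act on the right, so for a $0$-cube $x$, $x\sigma_1$ is the degenerate $1$-cube at $x$. A cube is degenerate if it is $x\sigma_i$ or $x\gamma_{i,\varepsilon}$; composites of faces have unique normal forms $\partial_{k_1,\varepsilon_1}\cdots\partial_{k_t,\varepsilon_t}$, $k_1>\dots>k_t$. A marked cubical set is a cubical set with marked cubes of positive dimension containing all degenerate cubes. $\tau_jX$ is $X$ with all cubes of dimension $\ge j+1$ marked. $\square^n_{k,\varepsilon}$ ($n\ge1$, $1\le k\le n$) is $\square^n$ in which a non-degenerate positive-dimensional face in normal form is marked iff none of its factors is $\partial_{k-1,\varepsilon},\partial_{k,0},\partial_{k,1},\partial_{k+1,\varepsilon}$; $\sqcap^n_{k,\varepsilon}$ is the union of codimension-one faces except $\partial_{k,\varepsilon}$, regularly marked; for $n\ge2$, $(\square^n_{k,\varepsilon})''=\tau_{n-2}\square^n_{k,\varepsilon}$ and $(\square^n_{k,\varepsilon})'$ is $\square^n_{k,\varepsilon}$ with all $(n-1)$-faces other than $\partial_{k,\varepsilon}$ marked. A comical set is a marked cubical set with the right lifting property against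 all $\sqcap^n_{k,\varepsilon}\hookrightarrow\square^n_{k,\varepsilon}$ and $(\square^n_{k,\varepsilon})'\hookrightarrow(\square^n_{k,\varepsilon})''$. Write a $2$-cube $s$ via its faces $(s\partial_{1,0},s\partial_{1,1},s\partial_{2,0},s\partial_{2,1})$. For $1$-cubes $f,g$ from $x$ to $y$ ($f\partial_{1,0}=x$, $f\partial_{1,1}=y$, same for $g$), $f\sim g$ (homotopic) means there is a marked $2$-cube with faces $(g,y\sigma_1,f,y\sigma_1)$ (equivalently, in a comical set, with faces $(x\sigma_1,f,x\sigma_1,g)$, or any of six other analogous configurations). Given $f$ from $x$ to $y$ and $g$ from $y$ to $z$, a $1$-cube $a$ is a $(1,0)$-composite of $f,g$ if there is a marked $2$-cube with faces $(a,g,f,z\sigma_1)$; $b$ is a $(1,1)$-composite if there is a marked $2$-cube with faces $(f,b,x\sigma_1,g)$; $c$ is a $(2,0)$-composite if there is a marked $2$-cube with faces $(f,z\sigma_1,c,g)$; $d$ is a $(2,1)$-composite if there is a marked $2$-cube with faces $(x\sigma_1,g,f,d)$. A composite of $f$ and $g$ is a composite of any of these four kinds (each is a $1$-cube from $x$ to $z$). *)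

(* Coordinates and operator indices are 0-based here: the paper's
   d_{i,e}, sigma_i, gamma_{i,e} (1-based) are dface _ (i-1) e,
   dsigma _ (i-1), dgamma _ (i-1) e. *)
From mathcomp Require Import all_boot.


(* The vertices of the poset [1]^n = {0<1}^n. *)
Definition pt (n : nat) := n.-tuple bool.

Definition dface n (i : nat) (e : bool) (y : pt n) : pt n.+1 :=
  [tuple (if (j : nat) < i then nth false y j
          else if (j : nat) == i then e else nth false y (j : nat).-1) | j < n.+1].

Definition dsigma n (i : nat) (y : pt n.+1) : pt n :=
  [tuple (if (j : nat) < i then nth false y j else nth false y (j : nat).+1) | j < n].

Definition dgamma n (i : nat) (e : bool) (y : pt n.+2) : pt n.+1 :=
  [tuple (if (j : nat) < i then nth false y j
          else if (j : nat) == i then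
            (if e then nth false y i || nth false y i.+1
             else nth false y i && nth false y i.+1)
          else nth false y (j : nat).+1) | j < n.+1].

(* The box category: the subcategory of posets generated by faces,
   degeneracies and connections (morphisms compared extensionally). *)
Inductive in_box : forall m n : nat, (pt m -> pt n) -> Prop :=
| box_id n : in_box n n (fun y : pt n => y)
| box_face n (i : nat) (e : bool) : i < n.+1 -> in_box n n.+1 (dface n i e)
| box_degen n (i : nat) : i < n.+1 -> in_box n.+1 n (dsigma n i)
| box_conn n (i : nat) (e : bool) : i < n.+1 -> in_box n.+2 n.+1 (dgamma n i e)
| box_comp l m n (f : pt l -> pt m) (g : pt m -> pt n) :
    in_box l m f -> in_box m n g -> in_box l n (fun y => g (f y))
| box_ext m n (f g : pt m -> pt n) : f =1 g -> in_box m n f -> in_box m n g.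
Arguments in_box {m n} f.

(* Cubical sets = presheaves on the box category; operators act on the right:
   for x in X_n and phi : [1]^m -> [1]^n, act phi x = x phi in X_m. *)
Record cubical_set := CubicalSet {
  cell :> nat -> Type;
  act : forall m n (f : pt m -> pt n), in_box f -> cell n -> cell m;
  act_ext : forall m n (f g : pt m -> pt n) (hf : in_box f) (hg : in_box g),
      f =1 g -> forall x, act m n f hf x = act m n g hg x;
  act_id : forall n (h : in_box (fun y : pt n => y)) x, act n n _ h x = x;
  act_comp : forall l m n (f : pt l -> pt m) (g : pt m -> pt n)
      (hf : in_box f) (hg : in_box g) (hgf : in_box (fun y => g (f y))) x,
      act l n _ hgf x = act l m f hf (act m n g hg x) }.
Arguments act {c m n f} h x.

Inductive is_degen : forall n m : nat, (pt n -> pt m) -> Prop :=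
| isdeg_sigma m (i : nat) : i < m.+1 -> is_degen m.+1 m (dsigma m i)
| isdeg_conn m (i : nat) (e : bool) : i < m.+1 -> is_degen m.+2 m.+1 (dgamma m i e).
Arguments is_degen {n m} f.

Definition degenerate (X : cubical_set) n (x : X n) : Prop :=
  exists m (d : pt n -> pt m) (h : in_box d) (y : X m), is_degen d /\ x = act h y.
Arguments degenerate {X n} x.

Record marked_cset := MarkedCSet {
  mc_base :> cubical_set;
  marked : forall n, mc_base n -> Prop;
  marked_pos : forall n (x : mc_base n), marked n x -> 0 < n;
  marked_degen : forall n (x : mc_base n), degenerate x -> marked n x }.
Arguments marked {m n} x.

Definition faceX (X : cubical_set) n (x : X n.+1) (i : 'I_n.+1) (e : bool) : X n :=
  act (box_face n i e (ltn_ord i)) x.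
Arguments faceX {X n} x i e.

(* composites of face maps (the non-degenerate cubes of the representable) *)
Inductive is_face : forall m n : nat, (pt m -> pt n) -> Prop :=
| isf_id n : is_face n n (fun y : pt n => y)
| isf_step m n (f : pt m -> pt n) (i : nat) (e : bool) :
    i < n.+1 -> is_face m n f -> is_face m n.+1 (fun y => dface n i e (f y)).
Arguments is_face {m n} f.

Definition degenerate_map m n (phi : pt m -> pt n) : Prop :=
  exists l (d : pt m -> pt l) (psi : pt l -> pt n),
    in_box psi /\ is_degen d /\ phi =1 (fun y => psi (d y)).
Arguments degenerate_map {m n} phi.

(* For a face phi, coordinate j is constantly v on it iff d_{j,v} is one of
   the factors of its normal form. *)
Definition coord_fixed m n (phi : pt m -> pt n) (j : 'I_n) (v : bool) : Prop :=
  forall y, tnth (phi y) j = v.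
Arguments coord_fixed {m n} phi j v.

(* normal form of the face contains none of d_{k-1,e}, d_{k,0}, d_{k,1}, d_{k+1,e} *)
Definition face_ok n (k : 'I_n) (e : bool) m (phi : pt m -> pt n) : Prop :=
  ~ coord_fixed phi k false /\ ~ coord_fixed phi k true /\
  (forall j : 'I_n, (j.+1 = k \/ (j : nat) = k.+1) -> ~ coord_fixed phi j e).
Arguments face_ok {n} k e {m} phi.

Definition box_marked n (k : 'I_n) (e : bool) m (phi : pt m -> pt n) : Prop :=
  0 < m /\ (degenerate_map phi \/ (is_face phi /\ face_ok k e phi)).
Arguments box_marked {n} k e {m} phi.

Definition prime_marked n (k : 'I_n) (e : bool) m (phi : pt m -> pt n) : Prop :=
  box_marked k e phi \/ (m.+1 = n /\ is_face phi /\ ~ coord_fixed phi k e).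
Arguments prime_marked {n} k e {m} phi.

(* marked cubes of (box^n_{k,e})'' = tau_{n-2} box^n_{k,e} *)
Definition tau_marked n (k : 'I_n) (e : bool) m (phi : pt m -> pt n) : Prop :=
  box_marked k e phi \/ n <= m.+1.
Arguments tau_marked {n} k e {m} phi.

(* the map (representable [1]^n, marking M) -> X classifying x is a map of
   marked cubical sets *)
Definition preserves (X : marked_cset) n
    (M : forall m, (pt m -> pt n) -> Prop) (x : X n) : Prop :=
  forall m (phi : pt m -> pt n) (h : in_box phi), M m phi -> marked (act h x).
Arguments preserves {X n} M x.

(* A map of marked cubical sets from the open box sqcap^{n+1}_{k,e} (union of
   the faces d_{i,d}, (i,d) <> (k,e), regularly marked) to X: an n-cube
   xs i d for each such face, agreeing on pairwise intersections, and sending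
   marked cubes to marked cubes. *)
Definition openbox (X : marked_cset) n (k : 'I_n.+1) (e : bool)
    (xs : 'I_n.+1 -> bool -> X n) : Prop :=
  (forall (i j : 'I_n.+1) (d d' : bool), (i, d) != (k, e) -> (j, d') != (k, e) ->
     forall m (psi psi' : pt m -> pt n) (h : in_box psi) (h' : in_box psi'),
       (forall y, dface n i d (psi y) = dface n j d' (psi' y)) ->
       act h (xs i d) = act h' (xs j d')) /\
  (forall (i : 'I_n.+1) (d : bool), (i, d) != (k, e) ->
     forall m (psi : pt m -> pt n) (h : in_box psi),
       box_marked k e (fun y => dface n i d (psi y)) -> marked (act h (xs i d))).
Arguments openbox {X n} k e xs.

(* comical sets: right lifting property against the open-box inclusions
   sqcap^n_{k,e} -> box^n_{k,e} (n >= 1) and against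
   (box^n_{k,e})' -> (box^n_{k,e})'' (n >= 2). *)
Definition comical (X : marked_cset) : Prop :=
  (forall n (k : 'I_n.+1) (e : bool) (xs : 'I_n.+1 -> bool -> X n),
     openbox k e xs ->
     exists x : X n.+1,
       (forall (i : 'I_n.+1) (d : bool), (i, d) != (k, e) -> faceX x i d = xs i d) /\
       preserves (fun m (phi : pt m -> pt n.+1) => box_marked k e phi) x) /\
  (forall n (k : 'I_n.+2) (e : bool) (x : X n.+2),
     preserves (fun m (phi : pt m -> pt n.+2) => prime_marked k e phi) x ->
     preserves (fun m (phi : pt m -> pt n.+2) => tau_marked k e phi) x).

Definition src (X : cubical_set) (f : X 1) : X 0 := faceX f ord0 false.
Arguments src {X} _.
Definition tgt (X : cubical_set) (f : X 1) : X 0 := faceX f ord0 true.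
Arguments tgt {X} _.

Definition cdeg (X : cubical_set) (x : X 0) : X 1 := act (box_degen 0 0 isT) x.
Arguments cdeg {X} _.

Definition faces2 (X : cubical_set) (s : X 2) : X 1 * X 1 * X 1 * X 1 :=
  (faceX s (@ord0 1) false, faceX s (@ord0 1) true,
   faceX s (@ord_max 1) false, faceX s (@ord_max 1) true).
Arguments faces2 {X} _.

Definition homotopic (X : marked_cset) (f g : X 1) : Prop :=
  src f = src g /\ tgt f = tgt g /\
  exists s : X 2, marked s /\ faces2 s = (g, cdeg (tgt f), f, cdeg (tgt f)).
Arguments homotopic {X} f g.

(* a is a composite (of one of the four kinds (1,0),(1,1),(2,0),(2,1)) of
   f : x -> y and g : y -> z *)
Definition composite (X : marked_cset) (f g a : X 1) : Prop :=
  exists s : X 2, marked s /\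
    (faces2 s = (a, g, f, cdeg (tgt g)) \/
     faces2 s = (f, a, cdeg (src f), g) \/
     faces2 s = (f, cdeg (tgt g), a, g) \/
     faces2 s = (cdeg (src f), g, f, a)).
Arguments composite {X} f g a.

From mathcomp Require Import all_boot.
Set Implicit Arguments. Unset Strict Implicit.

(* The proof follows the paper and consists of four fillings of
   3-dimensional open boxes.  In a comical set such a box, with marked
   faces glued compatibly, has a filler (first lifting property), and the
   missing face of the filler is marked (second lifting property, since
   tau_1 marks every 2-cube); this is [fill_box3].  The gluing conditions
   are enforced by describing the box through an edge labelling of [1]^3:
   the label of an edge depends only on its two endpoints.  For composites,
   the labelling is induced by a monotone map from the vertices of [1]^3
   to {x < y < z} ([triangle_edge]).  Three boxes turn a composite of kind
   (1,1), (2,0) or (2,1) into a (1,0)-composite, and a fourth box turns two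
   (1,0)-composites a, b into a homotopy a ~ b. *)

Lemma enum_I3 : enum 'I_3 = [:: @Ordinal 3 0 isT; @Ordinal 3 1 isT; @Ordinal 3 2 isT].
Proof. by apply: (inj_map val_inj); rewrite val_enum_ord. Qed.
Lemma enum_I2 : enum 'I_2 = [:: @Ordinal 2 0 isT; @Ordinal 2 1 isT].
Proof. by apply: (inj_map val_inj); rewrite val_enum_ord. Qed.
Lemma enum_I1 : enum 'I_1 = [:: @Ordinal 1 0 isT].
Proof. by apply: (inj_map val_inj); rewrite val_enum_ord. Qed.
Lemma enum_I0 : enum 'I_0 = [::].
Proof. by apply: (inj_map val_inj); rewrite val_enum_ord. Qed.

Ltac unfold_vertices :=
  rewrite /dface /dsigma /dgamma /= ?enum_I3 ?enum_I2 ?enum_I1 ?enum_I0 /=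
          ?enum_I3 ?enum_I2 ?enum_I1 ?enum_I0 /=.
Ltac unfold_vertices_in H :=
  rewrite /dface /dsigma /dgamma /= ?enum_I3 ?enum_I2 ?enum_I1 ?enum_I0 /=
          ?enum_I3 ?enum_I2 ?enum_I1 ?enum_I0 /= in H.
Ltac case_vertex y := case: y => [[|[] [|[] [|[] [|? ?]]]] //] ?.
Ltac vertex_ext := let y := fresh "y" in
  move=> y; apply: val_inj; case_vertex y; unfold_vertices.

Definition v0 : pt 1 := [tuple false].
Definition v1 : pt 1 := [tuple true].

Lemma pt1_cases (y : pt 1) : y = v0 \/ y = v1.
Proof. by case_vertex y; [right|left]; apply: val_inj. Qed.

Lemma facets_meet (i j : 'I_3) d d' (u v : pt 2) : i < j ->
  dface 2 i d u = dface 2 j d' v ->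
  [/\ u = dface 1 j.-1 d' (dsigma 1 j.-1 u), v = dface 1 i d (dsigma 1 i v)
    & dsigma 1 j.-1 u = dsigma 1 i v].
Proof.
case: i => [[|[|[|]]] //= Hi]; case: j => [[|[|[|]]] //= Hj] // _;
case: d; case: d'; case_vertex u; case_vertex v.
all: move=> /(congr1 val) H; unfold_vertices_in H; try discriminate H.
all: by split; apply: val_inj; unfold_vertices.
Qed.

Lemma face_face (i j : 'I_3) d d' (w : pt 1) : i < j ->
  dface 2 i d (dface 1 j.-1 d' w) = dface 2 j d' (dface 1 i d w).
Proof.
case: i => [[|[|[|]]] //= Hi]; case: j => [[|[|[|]]] //= Hj] // _;
by case: d; case: d'; case_vertex w; apply: val_inj; unfold_vertices.
Qed.

Lemma facet_eq (i : 'I_3) d d' (u v : pt 2) :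
  dface 2 i d u = dface 2 i d' v -> d = d' /\ u = v.
Proof.
case: i => [[|[|[|]]] //= Hi]; case: d; case: d'; case_vertex u; case_vertex v.
all: move=> /(congr1 val) H; unfold_vertices_in H; try discriminate H.
all: by split; [| apply: val_inj].
Qed.

Lemma sigma_facet (i : 'I_3) d (u : pt 2) : dsigma 2 i (dface 2 i d u) = u.
Proof.
by case: i => [[|[|[|]]] //= Hi]; case: d; case_vertex u; apply: val_inj; unfold_vertices.
Qed.

Lemma facet_coord (i : 'I_3) d (u : pt 2) : nth false (dface 2 i d u) i = d.
Proof. by case: i => [[|[|[|]]] //= Hi]; case: d; case_vertex u; unfold_vertices. Qed.

Lemma other_facet_coord (i i0 : 'I_3) e0 d : i != i0 ->
  nth false (dface 2 i0 e0 [tuple ~~ d; ~~ d]) i = ~~ d.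
Proof.
by case: i => [[|[|[|]]] //= Hi]; case: i0 => [[|[|[|]]] //= Hi0];
  case: e0; case: d; unfold_vertices.
Qed.

Lemma edge_in_facet (i : 'I_3) d (i0 : 'I_3) e0 (i1 : 'I_2) e1 :
  let p0 := dface 2 i0 e0 (dface 1 i1 e1 v0) in
  let p1 := dface 2 i0 e0 (dface 1 i1 e1 v1) in
  dface 2 i d (dsigma 2 i p0) = p0 -> dface 2 i d (dsigma 2 i p1) = p1 ->
  exists (c : 'I_2) e', dsigma 2 i p0 = dface 1 c e' v0 /\ dsigma 2 i p1 = dface 1 c e' v1.
Proof.
case: i => [[|[|[|]]] //= Hi]; case: i0 => [[|[|[|]]] //= Hi0];
case: i1 => [[|[|]] //= Hi1]; case: d; case: e0; case: e1; rewrite /v0 /v1.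
all: move=> /(congr1 val) H0 /(congr1 val) H1; unfold_vertices_in H0; unfold_vertices_in H1;
  try discriminate H0; try discriminate H1.
all: first [ by exists (@Ordinal 2 0 isT), false; split; apply: val_inj; unfold_vertices
           | by exists (@Ordinal 2 0 isT), true; split; apply: val_inj; unfold_vertices
           | by exists (@Ordinal 2 1 isT), false; split; apply: val_inj; unfold_vertices
           | by exists (@Ordinal 2 1 isT), true; split; apply: val_inj; unfold_vertices ].
Qed.

Lemma edge_in_other_facet (k : 'I_3) e (c : 'I_2) e' : exists (j : 'I_3) d (c' : 'I_2) e'',
  (j, d) != (k, e) /\
  forall w, dface 2 k e (dface 1 c e' w) = dface 2 j d (dface 1 c' e'' w).
Proof.
case: k => [[|[|[|]]] Hk] //; case: c => [[|[|]] Hc] //.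
- by exists (@Ordinal 3 1 isT), e', (@Ordinal 2 0 isT), e; split => // w;
    case: e; case: e'; case_vertex w; apply: val_inj; unfold_vertices.
- by exists (@Ordinal 3 2 isT), e', (@Ordinal 2 0 isT), e; split => // w;
    case: e; case: e'; case_vertex w; apply: val_inj; unfold_vertices.
- by exists (@Ordinal 3 0 isT), e', (@Ordinal 2 0 isT), e; split => // w;
    case: e; case: e'; case_vertex w; apply: val_inj; unfold_vertices.
- by exists (@Ordinal 3 2 isT), e', (@Ordinal 2 1 isT), e; split => // w;
    case: e; case: e'; case_vertex w; apply: val_inj; unfold_vertices.
- by exists (@Ordinal 3 0 isT), e', (@Ordinal 2 1 isT), e; split => // w;
    case: e; case: e'; case_vertex w; apply: val_inj; unfold_vertices.
- by exists (@Ordinal 3 1 isT), e', (@Ordinal 2 1 isT), e; split => // w;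
    case: e; case: e'; case_vertex w; apply: val_inj; unfold_vertices.
Qed.

(* The marking condition [face_ok] of box^3_{k,e}, read off on the two
   endpoints p, q of an edge: coordinate k varies, and neither neighbouring
   coordinate is constantly e. *)
Definition edge_ok (p q : pt 3) (k : 'I_3) (e : bool) : bool :=
  [&& nth false p k != nth false q k,
      (0 < k) ==> ~~ ((nth false p k.-1 == e) && (nth false q k.-1 == e)) &
      (k.+1 < 3) ==> ~~ ((nth false p k.+1 == e) && (nth false q k.+1 == e))].

Lemma face_ok_edge (phi : pt 1 -> pt 3) k e : face_ok k e phi -> edge_ok (phi v0) (phi v1) k e.
Proof.
case=> H0 [H1 Hnb].
have fixed : forall (j : 'I_3) v, nth false (phi v0) j = v -> nth false (phi v1) j = v ->
    coord_fixed phi j v.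
  by move=> j v E0 E1 y; rewrite (tnth_nth false); case: (pt1_cases y) => ->.
apply/and3P; split.
- apply/negP => /eqP E.
  by case Ev: (nth false (phi v1) k) E => E; [apply: H1 | apply: H0]; apply: fixed.
- apply/implyP => Hk; apply/negP => /andP [/eqP E0 /eqP E1].
  have Hk1 : k.-1 < 3 by apply: leq_ltn_trans (leq_pred k) (ltn_ord k).
  apply: (Hnb (Ordinal Hk1)); last exact: fixed.
  by left; rewrite /= prednK.
- apply/implyP => Hk; apply/negP => /andP [/eqP E0 /eqP E1].
  by apply: (Hnb (Ordinal Hk)); [right | exact: fixed].
Qed.

Lemma is_face_le m n (phi : pt m -> pt n) : is_face phi -> m <= n.
Proof. by elim=> // m' n' phi' i e _ _ IH; apply: leqW. Qed.

Lemma is_face_square m n (phi : pt m -> pt n) : is_face phi -> m = n ->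
  forall y, val (phi y) = val y.
Proof.
case=> [n'|m' n' phi' i e Hi Hphi] // E.
by have H := is_face_le Hphi; rewrite E ltnn in H.
Qed.

Lemma is_face_last m n (phi : pt m -> pt n) : is_face phi -> m < n ->
  exists n0 i e (psi : pt m -> pt n0), [/\ n = n0.+1, i < n0.+1, is_face psi &
     forall y, val (phi y) = val (dface n0 i e (psi y))].
Proof.
case=> [n'|m' n' psi i e Hi Hpsi]; first by rewrite ltnn.
by move=> _; exists n', i, e, psi.
Qed.

Lemma is_face_codim1 n (phi : pt n -> pt n.+1) : is_face phi ->
  exists (i : 'I_n.+1) e, forall y, phi y = dface n i e y.
Proof.
move=> Hphi; have [n0 [i [e [psi [En Hi Hpsi Ephi]]]]] := is_face_last Hphi (ltnSn n).
case: En => En; subst n0.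
exists (Ordinal Hi), e => y; apply: val_inj; rewrite Ephi.
by congr (val (dface _ _ _ _)); apply: val_inj; rewrite (is_face_square Hpsi erefl).
Qed.

Lemma is_face_codim2 n (phi : pt n -> pt n.+2) : is_face phi ->
  exists (i : 'I_n.+2) e (j : 'I_n.+1) e', forall y, phi y = dface n.+1 i e (dface n j e' y).
Proof.
move=> Hphi; have [n0 [i [e [psi [En Hi Hpsi Ephi]]]]] := is_face_last Hphi (leqnSn n.+1).
case: En => En; subst n0.
have [j [e' Epsi]] := is_face_codim1 Hpsi.
by exists (Ordinal Hi), e, j, e' => y; apply: val_inj; rewrite Ephi Epsi.
Qed.

Lemma degen_in_box n m (d : pt n -> pt m) : is_degen d -> in_box d.
Proof. by case=> [m' i Hi|m' i e Hi]; [apply: box_degen | apply: box_conn]. Qed.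

Lemma degenerate_map_comp l m n (phi : pt l -> pt m) (q : pt m -> pt n) :
  in_box q -> degenerate_map phi -> degenerate_map (fun y => q (phi y)).
Proof.
move=> hq [k [d [psi [hpsi [hd Ephi]]]]].
exists k, d, (fun y => q (psi y)); by split; [exact: box_comp | split => // y; rewrite /= Ephi].
Qed.

Section Action.
Variable X : cubical_set.

Lemma act_comm l m m' n (p1 : pt l -> pt m) (p2 : pt m -> pt n)
  (p3 : pt l -> pt m') (p4 : pt m' -> pt n)
  (h1 : in_box p1) (h2 : in_box p2) (h3 : in_box p3) (h4 : in_box p4) (x : X n) :
  (forall y, p2 (p1 y) = p4 (p3 y)) -> act h1 (act h2 x) = act h3 (act h4 x).
Proof.
move=> E; rewrite -(act_comp X _ _ _ _ _ h1 h2 (@box_comp _ _ _ _ _ h1 h2)).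
by rewrite -(act_comp X _ _ _ _ _ h3 h4 (@box_comp _ _ _ _ _ h3 h4)); apply: act_ext.
Qed.

Lemma act_factor l m n (p1 : pt l -> pt m) (p2 : pt m -> pt n) (q : pt l -> pt n)
  (h1 : in_box p1) (h2 : in_box p2) (hq : in_box q) (x : X n) :
  (forall y, q y = p2 (p1 y)) -> act hq x = act h1 (act h2 x).
Proof. by move=> E; rewrite -(act_comp X _ _ _ _ _ h1 h2 (@box_comp _ _ _ _ _ h1 h2)); apply: act_ext. Qed.

Lemma act_id_ext l (q : pt l -> pt l) (hq : in_box q) (x : X l) :
  (forall y, q y = y) -> act hq x = x.
Proof. by move=> E; rewrite -[RHS](act_id X _ (box_id l)); apply: act_ext. Qed.

Lemma act_retract l m (p1 : pt l -> pt m) (p2 : pt m -> pt l)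
  (h1 : in_box p1) (h2 : in_box p2) (x : X l) :
  (forall y, p2 (p1 y) = y) -> act h1 (act h2 x) = x.
Proof.
move=> E; rewrite -(act_factor h1 h2 (box_id l)) //; exact: act_id_ext.
Qed.

Lemma src_cdeg (w : X 0) : src (cdeg w) = w.
Proof. by apply: act_retract; vertex_ext. Qed.
Lemma tgt_cdeg (w : X 0) : tgt (cdeg w) = w.
Proof. by apply: act_retract; vertex_ext. Qed.

Lemma faceX_of_faces2 (s : X 2) l r b t : faces2 s = (l, r, b, t) ->
  forall (c : 'I_2) e, faceX s c e = if val c == 0 then (if e then r else l) else (if e then t else b).
Proof.
rewrite /faces2 => -[<- <- <- <-] [[|[|c]] Hc] e //=; case: e;
  by congr faceX; apply: val_inj.
Qed.

Lemma square_vertex (s : X 2) e1 e2 :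
  faceX (faceX s ord0 e1) ord0 e2 = faceX (faceX s ord_max e2) ord0 e1.
Proof. by apply: act_comm => y; apply: val_inj; case: e1; case: e2; case_vertex y; unfold_vertices. Qed.

Definition sq_sigma1 (g : X 1) : X 2 := act (box_degen 1 0 isT) g.
Definition sq_sigma2 (g : X 1) : X 2 := act (box_degen 1 1 isT) g.
Definition sq_max (g : X 1) : X 2 := act (box_conn 0 0 true isT) g.
Definition sq_min (g : X 1) : X 2 := act (box_conn 0 0 false isT) g.

Lemma faces2_sq_sigma1 g : faces2 (sq_sigma1 g) = (g, g, cdeg (src g), cdeg (tgt g)).
Proof.
rewrite /faces2 /sq_sigma1 /cdeg /src /tgt /faceX.
by congr (_,_,_,_); [apply: act_retract | apply: act_retract | apply: act_comm | apply: act_comm];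
  vertex_ext.
Qed.
Lemma faces2_sq_sigma2 g : faces2 (sq_sigma2 g) = (cdeg (src g), cdeg (tgt g), g, g).
Proof.
rewrite /faces2 /sq_sigma2 /cdeg /src /tgt /faceX.
by congr (_,_,_,_); [apply: act_comm | apply: act_comm | apply: act_retract | apply: act_retract];
  vertex_ext.
Qed.
Lemma faces2_sq_max g : faces2 (sq_max g) = (g, cdeg (tgt g), g, cdeg (tgt g)).
Proof.
rewrite /faces2 /sq_max /cdeg /src /tgt /faceX.
by congr (_,_,_,_); [apply: act_retract | apply: act_comm | apply: act_retract | apply: act_comm];
  vertex_ext.
Qed.
Lemma faces2_sq_min g : faces2 (sq_min g) = (cdeg (src g), g, cdeg (src g), g).
Proof.
rewrite /faces2 /sq_min /cdeg /src /tgt /faceX.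
by congr (_,_,_,_); [apply: act_comm | apply: act_retract | apply: act_comm | apply: act_retract];
  vertex_ext.
Qed.
End Action.

Section Marked.
Variable X : marked_cset.

Lemma marked_act_degenerate m n (phi : pt m -> pt n) (h : in_box phi) (x : X n) :
  degenerate_map phi -> marked (act h x).
Proof.
move=> [l [d [psi [hpsi [hd Ephi]]]]].
have hd' := degen_in_box hd.
rewrite (act_factor hd' hpsi h) //.
by apply: marked_degen; exists l, d, hd', (act hpsi x).
Qed.

Lemma marked_cdeg (w : X 0) : marked (cdeg w).
Proof. by apply: marked_degen; exists 0, (dsigma 0 0), (box_degen 0 0 isT), w; split => //; apply: isdeg_sigma. Qed.
Lemma marked_sq_sigma1 (w : X 1) : marked (sq_sigma1 w).
Proof. by apply: marked_degen; exists 1, (dsigma 1 0), (box_degen 1 0 isT), w; split => //; apply: isdeg_sigma. Qed.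
Lemma marked_sq_sigma2 (w : X 1) : marked (sq_sigma2 w).
Proof. by apply: marked_degen; exists 1, (dsigma 1 1), (box_degen 1 1 isT), w; split => //; apply: isdeg_sigma. Qed.
Lemma marked_sq_max (w : X 1) : marked (sq_max w).
Proof. by apply: marked_degen; exists 1, (dgamma 0 0 true), (box_conn 0 0 true isT), w; split => //; apply: isdeg_conn. Qed.
Lemma marked_sq_min (w : X 1) : marked (sq_min w).
Proof. by apply: marked_degen; exists 1, (dgamma 0 0 false), (box_conn 0 0 false isT), w; split => //; apply: isdeg_conn. Qed.
End Marked.

(* The box misses the facet (k, e); its
   other facets are the marked squares [xs i d], whose edges are prescribed by
   a labelling [EL] of pairs of vertices of [1]^3.  Since an edge shared by two
   facets has the same endpoints in both, the labelling makes the facets glue. *)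
Section FillBox3.
Variable X : marked_cset.
Variable k : 'I_3.
Variable e : bool.
Variable xs : 'I_3 -> bool -> X 2.
Variable EL : pt 3 -> pt 3 -> X 1.

Definition box_edge (i : nat) d (c : nat) e' :=
  EL (dface 2 i d (dface 1 c e' v0)) (dface 2 i d (dface 1 c e' v1)).

Hypothesis faces_xs : forall i d (c : 'I_2) e', (i, d) != (k, e) ->
  faceX (xs i d) c e' = box_edge i d c e'.
Hypothesis marked_xs : forall i d, (i, d) != (k, e) -> marked (xs i d).
Hypothesis marked_edges : forall i d (c : 'I_2) e', (i, d) != (k, e) ->
  edge_ok (dface 2 i d (dface 1 c e' v0)) (dface 2 i d (dface 1 c e' v1)) k e ->
  marked (box_edge i d c e').

Lemma glue_facets (i j : 'I_3) d d' : i < j -> (i, d) != (k, e) -> (j, d') != (k, e) ->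
  forall m (psi psi' : pt m -> pt 2) (h : in_box psi) (h' : in_box psi'),
  (forall y, dface 2 i d (psi y) = dface 2 j d' (psi' y)) -> act h (xs i d) = act h' (xs j d').
Proof.
move=> Hij Hi Hj m psi psi' h h' Heq.
have Hj1 : j.-1 < 2 by case: j Hij {Hj Heq} => [[|[|[|]]] ?].
have Hi2 : i < 2 by apply: leq_trans Hij _; rewrite -ltnS; apply: ltn_ord.
rewrite (act_factor (@box_comp _ _ _ _ _ h (box_degen 1 j.-1 Hj1)) (box_face 1 j.-1 d' Hj1) h);
  last by move=> y; case: (facets_meet Hij (Heq y)).
rewrite (act_factor (@box_comp _ _ _ _ _ h' (box_degen 1 i Hi2)) (box_face 1 i d Hi2) h');
  last by move=> y; case: (facets_meet Hij (Heq y)).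
have -> : act (box_face 1 j.-1 d' Hj1) (xs i d) = faceX (xs i d) (Ordinal Hj1) d'
  by apply: act_ext.
have -> : act (box_face 1 i d Hi2) (xs j d') = faceX (xs j d') (Ordinal Hi2) d
  by apply: act_ext.
rewrite faces_xs // faces_xs // /box_edge /= !(face_face _ _ _ Hij).
by apply: act_ext => y /=; case: (facets_meet Hij (Heq y)).
Qed.

Lemma glue_all_facets (i j : 'I_3) (d d' : bool) : (i, d) != (k, e) -> (j, d') != (k, e) ->
  forall m (psi psi' : pt m -> pt 2) (h : in_box psi) (h' : in_box psi'),
  (forall y, dface 2 i d (psi y) = dface 2 j d' (psi' y)) -> act h (xs i d) = act h' (xs j d').
Proof.
move=> Hi Hj m psi psi' h h' Heq.
case: (ltngtP i j) => Hij.
- exact: glue_facets.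
- by symmetry; apply: glue_facets => // y; rewrite Heq.
- have Eij : i = j by apply: val_inj.
  subst j; have y0 : pt m := [tuple false | _ < m].
  have [Ed _] := facet_eq (Heq y0); subst d'.
  by apply: act_ext => y; apply: (facet_eq (Heq y)).2.
Qed.

Lemma marked_box_edge (i : 'I_3) d (psi : pt 1 -> pt 2) (h : in_box psi) :
  (i, d) != (k, e) -> is_face (fun y => dface 2 i d (psi y)) ->
  face_ok k e (fun y => dface 2 i d (psi y)) -> marked (act h (xs i d)).
Proof.
move=> Hne Hface Hok.
have [i0 [e0 [i1 [e1 Ephi]]]] := is_face_codim2 Hface.
have := @edge_in_facet i d i0 e0 i1 e1; cbv zeta; rewrite -!Ephi !sigma_facet.
move=> /(_ erefl erefl) [c [e' [E0 E1]]].
have Epsi : forall y, psi y = dface 1 c e' y by move=> y; case: (pt1_cases y) => ->.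
have -> : act h (xs i d) = faceX (xs i d) c e' by apply: act_ext.
rewrite faces_xs //; apply: marked_edges => //.
by have := face_ok_edge Hok; rewrite /= !Epsi.
Qed.

Lemma marked_box_facet (i : 'I_3) d (psi : pt 2 -> pt 2) (h : in_box psi) :
  (i, d) != (k, e) -> is_face (fun y => dface 2 i d (psi y)) -> marked (act h (xs i d)).
Proof.
move=> Hne Hface.
have [i0 [e0 Ephi]] := is_face_codim1 Hface.
have Ei : i = i0.
  apply/eqP; apply/negPn/negP => Hn.
  have := congr1 (fun p : pt 3 => nth false p i) (Ephi [tuple ~~ d; ~~ d]).
  by rewrite /= facet_coord other_facet_coord //; case: (d) {Hne}.
subst i0.
rewrite (act_id_ext h); first exact: marked_xs.
by move=> y; apply: (facet_eq (Ephi y)).2.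
Qed.

Lemma xs_openbox : openbox k e xs.
Proof.
split; first exact: glue_all_facets.
move=> i d Hne m psi h [Hm [Hdeg | [Hface Hok]]].
- have hpsi : in_box (fun y => dsigma 2 i (dface 2 i d (psi y))).
    exact: @box_comp _ _ _ _ _ (@box_comp _ _ _ _ _ h (box_face 2 i d (ltn_ord i)))
      (box_degen 2 i (ltn_ord i)).
  have -> : act h (xs i d) = act hpsi (xs i d) by apply: act_ext => y; rewrite sigma_facet.
  by apply: marked_act_degenerate; apply: degenerate_map_comp => //; apply: box_degen.
- case: m psi h Hm Hface Hok => [|[|[|[|m]]]] psi h Hm Hface Hok //.
  + exact: marked_box_edge.
  + exact: marked_box_facet.
  + (* the whole cube [1]^3 is not contained in a facet *)
    exfalso; have := congr1 (fun p => nth false p i) (is_face_square Hface erefl [tuple ~~ d; ~~ d; ~~ d]).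
    rewrite /= facet_coord.
    by case: i Hne {Hok Hface} => [[|[|[|]]] Hi] //= _; case: d.
  + by have := is_face_le Hface.
Qed.

Lemma filler_prime_marked (x : X 3) :
  (forall (i : 'I_3) d, (i, d) != (k, e) -> faceX x i d = xs i d) ->
  preserves (fun m (phi : pt m -> pt 3) => box_marked k e phi) x ->
  preserves (fun m (phi : pt m -> pt 3) => prime_marked k e phi) x.
Proof.
move=> Hx Hpres m phi h [Hb | [Hm [Hface Hncf]]]; first exact: Hpres.
case: Hm => Hm; subst m.
have [i0 [e0 Ephi]] := is_face_codim1 Hface.
have -> : act h x = faceX x i0 e0 by apply: act_ext.
have Hne : (i0, e0) != (k, e).
  apply/eqP => -[Ek Ee]; apply: Hncf => y.
  by rewrite (tnth_nth false) Ephi -Ee -Ek facet_coord.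
by rewrite Hx //; apply: marked_xs.
Qed.

Lemma fill_box3 : comical X -> exists s : X 2, marked s /\
   forall (c : 'I_2) e', faceX s c e' = box_edge k e c e'.
Proof.
move=> [hX1 hX2].
have [x [Hx Hpres]] := hX1 2 k e xs xs_openbox.
have Htau := hX2 1 k e x (filler_prime_marked Hx Hpres).
exists (faceX x k e); split.
  exact: (Htau 2 (dface 2 k e) (box_face 2 k e (ltn_ord k)) (or_intror (leqnn 3))).
move=> c e'.
have [j [d' [c' [e'' [Hne Ew]]]]] := edge_in_other_facet k e c e'.
rewrite /faceX (act_comm (box_face 1 c e' (ltn_ord c)) (box_face 2 k e (ltn_ord k))
   (box_face 1 c' e'' (ltn_ord c')) (box_face 2 j d' (ltn_ord j)) x Ew).
rewrite -/(faceX x j d') Hx // -/(faceX (xs j d') c' e'') faces_xs //.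
by rewrite /box_edge !Ew.
Qed.
End FillBox3.

Section Composites.
Variable X : marked_cset.
Hypothesis hX : comical X.
Variables f g : X 1.
Hypothesis hfg : tgt f = src g.

(* The labelling of the edges of [1]^3 induced by a monotone map [lab] from
   its vertices to the vertices 0 < 1 < 2 of the triangle f : x -> y,
   g : y -> z; an edge from 0 to 2 ending at q is labelled [xz q]. *)
Definition triangle_edge (xz : pt 3 -> X 1) (lab : pt 3 -> nat) (p q : pt 3) : X 1 :=
  match lab p, lab q with
  | 0, 0 => cdeg (src f) | 0, 1 => f | 0, 2 => xz q | 1, 1 => cdeg (src g)
  | 1, 2 => g | _, _ => cdeg (tgt g) end.

Definition comp10 (a : X 1) : Prop :=
  exists s : X 2, marked s /\ faces2 s = (a, g, f, cdeg (tgt g)).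

Ltac simp_squares :=
  rewrite ?(faceX_of_faces2 (faces2_sq_sigma1 _)) ?(faceX_of_faces2 (faces2_sq_sigma2 _))
          ?(faceX_of_faces2 (faces2_sq_max _)) ?(faceX_of_faces2 (faces2_sq_min _))
          ?src_cdeg ?tgt_cdeg ?hfg.
Ltac simp_known_faces :=
  repeat match goal with
  | H : faces2 ?s = _ |- context [faceX ?s _ _] => rewrite (faceX_of_faces2 H) /=
  end.
Ltac check_facets xs lab :=
  move=> [[|[|[|?]]] ?] [] [[|[|?]] ?] [] //= ?; rewrite /xs /=; simp_squares;
  simp_known_faces; rewrite /box_edge /triangle_edge /lab; unfold_vertices; simp_squares.
Ltac check_marked_facets xs :=
  move=> [[|[|[|?]]] ?] [] //= ?; rewrite /xs /=;
  by [apply: marked_sq_sigma1 | apply: marked_sq_sigma2 | apply: marked_sq_max | apply: marked_sq_min].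
(* Only degenerate edges are marked in these boxes. *)
Ltac check_marked_edges lab :=
  move=> [[|[|[|?]]] ?] [] [[|[|?]] ?] [] //= ?;
  rewrite /edge_ok /box_edge /triangle_edge /lab; unfold_vertices => // _; exact: marked_cdeg.
Ltac compute_missing_facet Hfs lab :=
  rewrite /faces2 !Hfs /box_edge /triangle_edge /lab /=; unfold_vertices; simp_squares.

Section FromComposite.
Variables (a : X 1) (s : X 2).
Hypothesis hs : marked s.

(* A (2,0)-composite, s = (f, z sigma_1, a, g), is a (1,0)-composite: fill the
   box missing d_{3,0}; a vertex p is labelled 2 if p_2 = 1, else 1 if p_1 = 1
   or p_3 = 1, else 0. *)
Definition lab20 (p : pt 3) : nat :=
  let c := nth false p in if c 1 then 2 else if c 0 || c 2 then 1 else 0.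
Definition box20 (i : 'I_3) (d : bool) : X 2 :=
  match nat_of_ord i, d with
  | 0, false => s | 0, true => sq_sigma2 g | 1, false => sq_max f
  | 1, true => sq_sigma1 (cdeg (tgt g)) | _, _ => sq_sigma1 g end.

Lemma comp20_comp10 : faces2 s = (f, cdeg (tgt g), a, g) -> comp10 a.
Proof.
move=> Hs.
have [||| s' [Hm Hfs]] :=
  @fill_box3 X (@Ordinal 3 2 isT) false box20 (triangle_edge (fun _ => a) lab20) _ _ _ hX.
- by check_facets box20 lab20.
- by check_marked_facets box20.
- by check_marked_edges lab20.
- by exists s'; split => //; compute_missing_facet Hfs lab20.
Qed.

(* A (2,1)-composite, s = (x sigma_1, g, f, a), is a (1,0)-composite: fill the
   box missing d_{3,1}; a vertex p is labelled 0 if p_1 = p_2 = 0, 2 if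
   p_2 = p_3 = 1, and 1 otherwise. *)
Definition lab21 (p : pt 3) : nat :=
  let c := nth false p in if ~~ c 0 && ~~ c 1 then 0 else if c 1 && c 2 then 2 else 1.
Definition box21 (i : 'I_3) (d : bool) : X 2 :=
  match nat_of_ord i, d with
  | 0, false => s | 0, true => sq_min g | 1, false => sq_sigma2 f
  | 1, true => sq_sigma1 g | _, _ => sq_max f end.

Lemma comp21_comp10 : faces2 s = (cdeg (src f), g, f, a) -> comp10 a.
Proof.
move=> Hs.
have [||| s' [Hm Hfs]] :=
  @fill_box3 X (@Ordinal 3 2 isT) true box21 (triangle_edge (fun _ => a) lab21) _ _ _ hX.
- by check_facets box21 lab21.
- by check_marked_facets box21.
- by check_marked_edges lab21.
- by exists s'; split => //; compute_missing_facet Hfs lab21.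
Qed.

(* A (1,1)-composite, s = (f, a, x sigma_1, g), is a (1,0)-composite: fill the
   box missing d_{2,1}; a vertex p is labelled 0 if p_1 = p_3 = 0, 2 if
   p_2 = p_3 = 1, and 1 otherwise. *)
Definition lab11 (p : pt 3) : nat :=
  let c := nth false p in if ~~ c 0 && ~~ c 2 then 0 else if c 1 && c 2 then 2 else 1.
Definition box11 (i : 'I_3) (d : bool) : X 2 :=
  match nat_of_ord i, d with
  | 0, false => s | 0, true => sq_min g | 1, false => sq_max f
  | 2, false => sq_sigma2 f | _, _ => sq_sigma1 g end.

Lemma comp11_comp10 : faces2 s = (f, a, cdeg (src f), g) -> comp10 a.
Proof.
move=> Hs.
have [||| s' [Hm Hfs]] :=
  @fill_box3 X (@Ordinal 3 1 isT) true box11 (triangle_edge (fun _ => a) lab11) _ _ _ hX.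
- by check_facets box11 lab11.
- by check_marked_facets box11.
- by check_marked_edges lab11.
- by exists s'; split => //; compute_missing_facet Hfs lab11.
Qed.
End FromComposite.

Lemma composite_comp10 (a : X 1) : composite f g a -> comp10 a.
Proof.
case=> s [hs [Hs|[Hs|[Hs|Hs]]]].
- by exists s.
- exact: comp11_comp10 hs Hs.
- exact: comp20_comp10 hs Hs.
- exact: comp21_comp10 hs Hs.
Qed.

(* Two (1,0)-composites a, b (squares s = (a, g, f, z sigma_1) and
   t = (b, g, f, z sigma_1)) give a homotopy (b, z sigma_1, a, z sigma_1):
   fill the box missing d_{1,0}, labelled 0 at (0,0,0), 1 at (1,0,0) and 2
   elsewhere; the edge from (0,0,0) to (0,1,0) is labelled a, the one to
   (0,0,1) is labelled b. *)
Definition lab_htpy (p : pt 3) : nat :=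
  let c := nth false p in
  if ~~ c 0 && ~~ c 1 && ~~ c 2 then 0 else if c 0 && ~~ c 1 && ~~ c 2 then 1 else 2.
Definition box_htpy (s t : X 2) (i : 'I_3) (d : bool) : X 2 :=
  match nat_of_ord i, d with
  | 0, true => sq_max g | 1, false => t | 2, false => s | _, _ => sq_sigma1 (cdeg (tgt g)) end.

Lemma comp10_square (a b : X 1) : comp10 a -> comp10 b ->
  exists h : X 2, marked h /\ faces2 h = (b, cdeg (tgt g), a, cdeg (tgt g)).
Proof.
move=> [s [hs Hs]] [t [ht Ht]].
have [||| h [Hm Hfs]] := @fill_box3 X (@Ordinal 3 0 isT) false (box_htpy s t)
  (triangle_edge (fun q => if nth false q 1 then a else b) lab_htpy) _ _ _ hX.
- by check_facets box_htpy lab_htpy.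
- by check_marked_facets box_htpy.
- by check_marked_edges lab_htpy.
- by exists h; split => //; compute_missing_facet Hfs lab_htpy.
Qed.

Lemma comp10_ends (a : X 1) : comp10 a -> src a = src f /\ tgt a = tgt g.
Proof.
move=> [s [_]]; rewrite /faces2 => -[Ea _ Ef Ez]; split.
- by rewrite /src -Ea -Ef square_vertex.
- by rewrite /tgt -Ea square_vertex Ez; apply: src_cdeg.
Qed.

Lemma comp10_homotopic (a b : X 1) : comp10 a -> comp10 b -> homotopic a b.
Proof.
move=> ha hb.
have [[Sa Ta] [Sb Tb]] := (comp10_ends ha, comp10_ends hb).
have [h [Hm Hh]] := comp10_square ha hb.
by split; [rewrite Sa Sb | split; [rewrite Ta Tb | exists h; rewrite Ta]].
Qed.
End Composites.

Unset Implicit Arguments.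
Theorem proposition4p4 (X : marked_cset) (hX : comical X) (f g : X 1)
    (hfg : tgt f = src g) (a b : X 1) :
  composite f g a -> composite f g b -> homotopic a b.
Proof.
move=> /(composite_comp10 hX hfg) ha /(composite_comp10 hX hfg) hb.
exact: (comp10_homotopic hX ha hb).
Qed.
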